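(* Let $\mathcal R$ be a reaction network and suppose $\mathcal U\subseteq\mathcal S$ is eliminable in $\mathcal R$ with respect to $\mathcal F\subseteq\mathcal R_{\mathcal U}$. Let $x,x'\in\mathbb{N}_0^n$. (i) If $x$ leads to $x'$ via $\mathcal R^*_{\mathcal U,\mathcal F}$, then $x$ leads to $x'$ via $\mathcal R$. (ii) Suppose moreover that $\mathcal U$ consists of intermediate species, that $\mathcal F=\mathcal R_{\mathcal U}$, and that $(\mathrm{supp}(x)\cup\mathrm{supp}(x'))\cap\mathcal U=\emptyset$. If $x$ leads to $x'$ via $\mathcal R$, then $x$ leads to $x'$ via $\mathcal R^*_{\mathcal U,\mathcal F}$.
   Context: Species $S_1,\dots,S_n$ are the unit vectors of $\mathbb{N}_0^n$ and $\mathcal S=\{S_1,\dots,S_n\}$; for $x\in\mathbb{N}_0^n$, $\mathrm{supp}(x)=\{S_k: x^k>0\}$. A reaction network (RN) is a (possibly infinite) subset $\mathcal R\subseteq\mathbb{N}_0^n\times\mathbb{N}_0^n$ containing no $(y,y')$ with $y=y'$; elements $(y,y')$ are reactions $y\to y'$ with reactant $y$ and product $y'$. For $r_1=(y_1,y_1'),\ r_2=(y_2,y_2')$ define $r_1\oplus r_2=(y_1+0\vee(y_2-y_1'),\ y_2'+0\vee(y_1'-y_2))$ ($\vee$ componentwise maximum); it is associative. $\mathrm{cl}(A)$ is the set of all finite $\oplus$-sums of elements of $A$, including $(0,0)$. $(y_1,y_1')\sim(0,0)$ means $y_1=y_1'$. For $\mathcal U\subseteq\mathcal S$ and a set $B$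 write $B_{\mathcal U}=\{(y,y')\in B:\mathrm{supp}(y)\cap\mathcal U\neq\emptyset\}$, $B_{\mathcal U}'=\{(y,y')\in B:\mathrm{supp}(y')\cap\mathcal U\neq\emptyset\}$. Set $\overline{\mathcal R}=\mathrm{cl}(\mathcal R)$, $\mathcal R_0=\mathcal R\setminus(\mathcal R_{\mathcal U}\cup\mathcal R_{\mathcal U}')$, $\overline{\mathcal R}_0=\overline{\mathcal R}\setminus(\overline{\mathcal R}_{\mathcal U}\cup\overline{\mathcal R}_{\mathcal U}')$. $\mathcal U$ is eliminable in $\mathcal R$ with respect to $\mathcal F\subseteq\mathcal R_{\mathcal U}$ if for every $r_0\in\mathcal R_{\mathcal U}'$ and $r_1\in\mathrm{cl}(\mathcal F)$ with $r_0\oplus r_1\notin\overline{\mathcal R}_{\mathcal U}$ there is $r_2\in\mathrm{cl}(\mathcal F)$ with $r_0\oplus r_1\oplus r_2\in\overline{\mathcal R}_0$. The reduced RN is $\mathcal R^*_{\mathcal U,\mathcal F}=\mathcal R_0\cup\mathcal R_{\mathcal U,\mathcal F}$ with $\mathcal R_{\mathcal U,\mathcal F}=\{r_0\oplus r_1\in\overline{\mathcal R}_0: r_0\in\mathcal R_{\mathcal U}',\ r_1\in\mathrm{cl}(\mathcal F)\}\setminus\{r:r\sim(0,0)\}$. $\mathcal U$ consists of non-interacting species if for every $y\to y'\in\mathcal R$, $\sum_{S_i\in\mathcal U}y^i\le1$ and $\sum_{S_i\in\mathcal U}(y')^i\le1$; it consists of intermediate species if moreover, for every $S_i\in\mathcal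 U$ and $y\to y'\in\mathcal R$, $y^i=1$ implies $y=S_i$ and $(y')^i=1$ implies $y'=S_i$. An ordered sequence of reactions $y_1\to y_1',\dots,y_m\to y_m'$ is active on $x$ if $x+\sum_{i=1}^{k-1}(y_i'-y_i)\ge y_k$ (componentwise) for all $k$; $x$ leads to $x'$ via an RN if there is an ordered sequence of $m\ge0$ of its reactions (repetitions allowed) active on $x$ with $x'=x+\sum_{i=1}^m(y_i'-y_i)$. *)

From mathcomp Require Import all_boot.
Set Implicit Arguments. Unset Strict Implicit. Unset Printing Implicit Defensive.

(* Complexes: elements of N_0^n, species = indices 'I_n. *)
Definition complex (n : nat) := {ffun 'I_n -> nat}.
Definition reaction (n : nat) := (complex n * complex n)%type.
Definition rset (n : nat) := reaction n -> Prop.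

Definition zero_c n : complex n := [ffun _ => 0].
Definition zero_r n : reaction n := (zero_c n, zero_c n).

Definition is_RN n (R : rset n) : Prop := forall r, R r -> r.1 <> r.2.

(* r1 (+) r2 = (y1 + 0 v (y2 - y1'), y2' + 0 v (y1' - y2)); truncated subn is 0 v (a - b). *)
Definition oplus n (r1 r2 : reaction n) : reaction n :=
  ([ffun i => r1.1 i + (r2.1 i - r1.2 i)], [ffun i => r2.2 i + (r1.2 i - r2.1 i)]).

Definition osum n (s : seq (reaction n)) : reaction n := foldr (@oplus n) (zero_r n) s.
Definition cl n (A : rset n) : rset n :=
  fun r => exists s : seq (reaction n), (forall a, a \in s -> A a) /\ r = osum s.

Definition supp n (y : complex n) : {set 'I_n} := [set i | 0 < y i].

Definition subU n (U : {set 'I_n}) (B : rset n) : rset n :=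
  fun r => B r /\ supp r.1 :&: U != set0.
Definition subU' n (U : {set 'I_n}) (B : rset n) : rset n :=
  fun r => B r /\ supp r.2 :&: U != set0.
Definition sub0 n (U : {set 'I_n}) (B : rset n) : rset n :=
  fun r => B r /\ ~ subU U B r /\ ~ subU' U B r.

Definition eliminable n (U : {set 'I_n}) (R F : rset n) : Prop :=
  forall r0 r1, subU' U R r0 -> cl F r1 -> ~ subU U (cl R) (oplus r0 r1) ->
    exists r2, cl F r2 /\ sub0 U (cl R) (oplus (oplus r0 r1) r2).

Definition RUF n (U : {set 'I_n}) (R F : rset n) : rset n :=
  fun r => (exists r0 r1, subU' U R r0 /\ cl F r1 /\ r = oplus r0 r1)
           /\ sub0 U (cl R) r /\ r.1 <> r.2.

Definition reduced n (U : {set 'I_n}) (R F : rset n) : rset n :=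
  fun r => sub0 U R r \/ RUF U R F r.

Definition non_interacting n (U : {set 'I_n}) (R : rset n) : Prop :=
  forall r, R r -> \sum_(i in U) r.1 i <= 1 /\ \sum_(i in U) r.2 i <= 1.

Definition intermediate n (U : {set 'I_n}) (R : rset n) : Prop :=
  non_interacting U R /\
  forall i r, i \in U -> R r ->
    (r.1 i = 1 -> r.1 = [ffun j => (j == i : nat)]) /\
    (r.2 i = 1 -> r.2 = [ffun j => (j == i : nat)]).

Inductive leads n (R : rset n) : complex n -> complex n -> Prop :=
| leads_refl (x : complex n) : leads R x x
| leads_step (x x' y y' : complex n) : R (y, y') -> (forall i, y i <= x i) ->
    leads R [ffun i => x i - y i + y' i] x' -> leads R x x'.

From mathcomp Require Import all_boot.
From mathcomp Require Import zify.
Set Implicit Arguments. Unset Strict Implicit. Unset Printing Implicit Defensive.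

(* Firing a reaction r on a state x gives x - r.1 + r.2; the central
   algebraic fact (enabled_oplus, fire_oplus) is that firing r1 (+) r2 is
   the same as firing r1 and then r2, with the same enabling conditions.

   (i) Every reaction of the reduced network lies in cl(R), and by the fact
   above any element of cl(R) enabled on x can be realised by a sequence of
   reactions of R.

   (ii) Take a trace of R-reactions between U-free states.  We generalise to
   traces of "extended" reactions: those of R together with partial
   composites r0 (+) r1 (r0 producing species of U, r1 in cl(F)) whose
   reactant is U-free, and induct on the length of the trace.  If the first
   reaction r has a U-free product it is a reaction of the reduced network
   (or trivial).  Otherwise r produces some intermediate i in U; since the
   final state has no i, a later reaction consumes it, and for intermediates
   that reaction is e_i -> w, which commutes to just after r
   (extract_consumer).  Replacing r and e_i -> w by r (+) (e_i -> w) gives a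
   strictly shorter extended trace. *)

Definition fire n (x : complex n) (r : reaction n) : complex n :=
  [ffun i => x i - r.1 i + r.2 i].

Definition enabled n (x : complex n) (r : reaction n) : Prop :=
  forall i, r.1 i <= x i.

Definition e n (i : 'I_n) : complex n := [ffun j => (j == i : nat)].

Definition U_free n (U : {set 'I_n}) (y : complex n) : Prop :=
  forall i, i \in U -> y i = 0.

Fixpoint trace n (Q : rset n) (x : complex n) (s : seq (reaction n))
    (x' : complex n) : Prop :=
  match s with
  | [::] => x = x'
  | r :: s => [/\ Q r, enabled x r & trace Q (fire x r) s x']
  end.

Lemma oplusA n (a b c : reaction n) : oplus (oplus a b) c = oplus a (oplus b c).
Proof. by congr (_, _); apply/ffunP => i; rewrite !ffunE /= ?ffunE; lia. Qed.

Lemma oplus0r n (b : reaction n) : oplus (zero_r n) b = b.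
Proof. by case: b => b1 b2; congr (_, _); apply/ffunP => i; rewrite !ffunE /= ?ffunE; lia. Qed.

Lemma oplusr0 n (b : reaction n) : oplus b (zero_r n) = b.
Proof. by case: b => b1 b2; congr (_, _); apply/ffunP => i; rewrite !ffunE /= ?ffunE; lia. Qed.

Lemma osum_cat n (s t : seq (reaction n)) : osum (s ++ t) = oplus (osum s) (osum t).
Proof. by elim: s => [|a s IH] /=; rewrite ?oplus0r // IH oplusA. Qed.

Lemma cl_oplus n (A : rset n) a b : cl A a -> cl A b -> cl A (oplus a b).
Proof.
move=> [s [Hs ->]] [t [Ht ->]]; exists (s ++ t); split; last by rewrite osum_cat.
by move=> x; rewrite mem_cat => /orP [/Hs|/Ht].
Qed.

Lemma cl_in n (A : rset n) a : A a -> cl A a.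
Proof.
move=> Ha; exists [:: a]; split; last by rewrite /= oplusr0.
by move=> x; rewrite inE => /eqP ->.
Qed.

Lemma cl_mono n (A B : rset n) : (forall r, A r -> B r) -> forall r, cl A r -> cl B r.
Proof. by move=> AB r [s [Hs ->]]; exists s; split => // x /Hs /AB. Qed.

Lemma enabled_oplus n (x : complex n) (a b : reaction n) :
  enabled x (oplus a b) <-> enabled x a /\ enabled (fire x a) b.
Proof.
split=> [H | [Ha Hb] i]; first by split=> i; have := H i; rewrite !ffunE; lia.
by have := Ha i; have := Hb i; rewrite !ffunE; lia.
Qed.

Lemma fire_oplus n (x : complex n) (a b : reaction n) :
  enabled x (oplus a b) -> fire x (oplus a b) = fire (fire x a) b.
Proof. by move=> H; apply/ffunP => i; have := H i; rewrite !ffunE; lia. Qed.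

Lemma fire0 n (x : complex n) : fire x (zero_r n) = x.
Proof. by apply/ffunP => i; rewrite !ffunE /= ?ffunE; lia. Qed.

Lemma fire_swap n (z : complex n) (a b : reaction n) :
  (forall j, a.1 j + b.1 j <= z j) ->
  enabled (fire z a) b /\ fire (fire z a) b = fire (fire z b) a.
Proof.
move=> H; split=> [j|]; first by have := H j; rewrite !ffunE; lia.
by apply/ffunP => j; have := H j; rewrite !ffunE; lia.
Qed.

Lemma leads_fire n (Q : rset n) (x x' : complex n) (r : reaction n) :
  Q r -> enabled x r -> leads Q (fire x r) x' -> leads Q x x'.
Proof. by case: r => y y'; exact: leads_step. Qed.

Lemma leads_trans n (Q : rset n) x y z : leads Q x y -> leads Q y z -> leads Q x z.
Proof. by elim=> // x0 x1 y0 y1 HQ Hle _ IH /IH; exact: leads_step. Qed.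

Lemma leads_trace n (Q : rset n) x x' : leads Q x x' -> exists s, trace Q x s x'.
Proof.
elim=> [x0|x0 x1 y y' HQ Hle _ [s Hs]]; first by exists [::].
by exists ((y, y') :: s).
Qed.

Lemma trace_mono n (Q Q' : rset n) : (forall r, Q r -> Q' r) ->
  forall s x x', trace Q x s x' -> trace Q' x s x'.
Proof. by move=> QQ'; elim=> [|r s IH] x x' //= [/QQ' ? ? /IH]. Qed.

Lemma cl_leads n (R : rset n) (r : reaction n) (x : complex n) :
  cl R r -> enabled x r -> leads R x (fire x r).
Proof.
move=> [s [Hs ->]]; elim: s x Hs => [|a s IH] x Hs /=.
  by rewrite fire0 => _; exact: leads_refl.
move=> Hen; have [Ha Hsum] := (enabled_oplus x a (osum s)).1 Hen.
rewrite fire_oplus //; apply: leads_fire Ha _; first by apply: Hs; rewrite inE eqxx.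
by apply: IH => // b bs; apply: Hs; rewrite inE bs orbT.
Qed.

Lemma extract_consumer n (Q : rset n) (i : 'I_n) :
  (forall r, Q r -> 0 < r.1 i -> r.1 = e i) ->
  forall s z x', trace Q z s x' -> 0 < z i -> x' i = 0 ->
  exists w s', [/\ Q (e i, w), trace Q (fire z (e i, w)) s' x' & size s' < size s].
Proof.
move=> HQ; elim=> [|r s IH] z x' /=; first by move=> -> zi x'i; rewrite x'i in zi.
move=> [Qr Hen Hs] zi x'i; case: (posnP (r.1 i)) => [ri|ri]; last first.
  have Er : (e i, r.2) = r by rewrite -(HQ _ Qr ri); case: (r).
  by exists r.2, s; rewrite Er.
have zi' : 0 < fire z r i by rewrite ffunE; lia.
have [w [s' [Qw Hs' Hsz]]] := IH _ _ Hs zi' x'i.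
have [Hen' Hcomm] : enabled (fire z (e i, w)) r /\
    fire (fire z (e i, w)) r = fire (fire z r) (e i, w).
  apply: fire_swap => j /=; rewrite ffunE; case: eqVneq => [->|_] /=; last exact: Hen.
  by rewrite ri; lia.
by exists w, (r :: s'); split=> //=; rewrite Hcomm.
Qed.

Section Reduction.
Variables (n : nat) (R : rset n) (U : {set 'I_n}) (F : rset n).

Lemma reduced_cl : (forall r, F r -> R r) -> forall r, reduced U R F r -> cl R r.
Proof.
move=> FR r [[Rr _]|[[r0 [r1 [[Rr0 _] [Fr1 ->]]]] _]]; first exact: cl_in.
by apply: cl_oplus (cl_in Rr0) _; exact: cl_mono Fr1.
Qed.

Lemma reduced_leads : (forall r, F r -> R r) ->
  forall x x', leads (reduced U R F) x x' -> leads R x x'.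
Proof.
move=> FR x x'; elim=> [x0|x0 x1 y y' Hred Hen _ IH]; first exact: leads_refl.
exact: leads_trans (cl_leads (reduced_cl FR Hred) Hen) IH.
Qed.

Lemma U_free_supp (y : complex n) : U_free U y <-> supp y :&: U = set0.
Proof.
split=> [Hy | Hy i iU].
  by apply/setP => j; rewrite !inE; case: (boolP (j \in U)) => [/Hy ->|]; rewrite andbC.
apply/eqP; rewrite -leqn0 leqNgt; apply/negP => yi.
have : i \in supp y :&: U by rewrite !inE yi iU.
by rewrite Hy inE.
Qed.

Lemma U_free_dec (y : complex n) : U_free U y \/ exists2 i, i \in U & 0 < y i.
Proof.
case: (eqVneq (supp y :&: U) set0) => [/U_free_supp|]; first by left.
by case/set0Pn => i; rewrite !inE => /andP [yi iU]; right; exists i.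
Qed.

Lemma sub0_free (B : rset n) r : B r -> U_free U r.1 -> U_free U r.2 -> sub0 U B r.
Proof.
by move=> Br /U_free_supp H1 /U_free_supp H2; split=> //; split=> -[_]; rewrite ?H1 ?H2 eqxx.
Qed.

Definition extended : rset n := fun r =>
  R r \/ exists r0 r1, [/\ subU' U R r0, cl F r1, r = oplus r0 r1 & U_free U r.1].

Lemma extended_reduced (x : complex n) r : (forall q, F q -> R q) ->
  extended r -> U_free U r.1 -> U_free U r.2 -> enabled x r ->
  leads (reduced U R F) x (fire x r).
Proof.
move=> FR Er H1 H2 Hen; case: Er => [Rr|[r0 [r1 [H0 H1F Hr _]]]].
  by apply: leads_fire Hen (leads_refl _ _); left; exact: sub0_free.
case: (eqVneq r.1 r.2) => [Err|Nrr].
  have -> : fire x r = x.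
    by apply/ffunP => i; have := Hen i; rewrite ffunE Err => /subnK.
  exact: leads_refl.
apply: leads_fire Hen (leads_refl _ _); right; split; first by exists r0, r1.
split; last exact/eqP.
apply: sub0_free => //; rewrite Hr.
by apply: cl_oplus (cl_in H0.1) _; exact: cl_mono H1F.
Qed.

Hypothesis inter : intermediate U R.
Hypothesis F_RU : forall r, F r <-> subU U R r.

(* For intermediates, every extended reaction consuming i in U has
   reactant e_i (partial composites have U-free reactants). *)
Lemma extended_consumer (i : 'I_n) :
  i \in U -> forall q, extended q -> 0 < q.1 i -> q.1 = e i.
Proof.
case: inter => [HN HI] iU q [Rq|[q0 [q1 [_ _ _ Hq]]]] qi; last by rewrite Hq in qi.
have H1 : q.1 i <= \sum_(j in U) q.1 j by rewrite (bigD1 i) //= leq_addr.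
have [Hs _] := HN _ Rq; apply: (HI i q iU Rq).1; lia.
Qed.

Lemma extended_e (i : 'I_n) w : i \in U -> extended (e i, w) -> R (e i, w).
Proof.
move=> iU [//|[q0 [q1 [_ _ _ Hq]]]].
by have := Hq i iU; rewrite /= ffunE eqxx.
Qed.

Lemma extended_absorb (i : 'I_n) w r :
  i \in U -> extended r -> U_free U r.1 -> 0 < r.2 i -> R (e i, w) ->
  extended (oplus r (e i, w)).
Proof.
move=> iU Er Hr1 ri Rw.
have Fw : F (e i, w).
  by apply/F_RU; split=> //; apply/set0Pn; exists i; rewrite !inE /= ffunE eqxx iU.
have E1 : (oplus r (e i, w)).1 = r.1.
  by apply/ffunP => j; rewrite !ffunE; case: eqVneq => [->|_] /=; lia.
right; rewrite E1; case: Er => [Rr|[r0 [r1 [H0 H1 Hr _]]]].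
  exists r, (e i, w); split=> //; last exact: cl_in.
  by split=> //; apply/set0Pn; exists i; rewrite !inE ri iU.
exists r0, (oplus r1 (e i, w)); rewrite -oplusA -Hr; split=> //.
exact: cl_oplus H1 (cl_in Fw).
Qed.

Lemma extended_trace_reduced s x x' :
  trace extended x s x' -> U_free U x -> U_free U x' -> leads (reduced U R F) x x'.
Proof.
have [m] := ubnP (size s); elim: m s x x' => // m IH.
case=> [x x' _ /= -> _ _|r s]; first exact: leads_refl.
move=> x x'; rewrite ltnS => Hsz [Er Hen Hs] Hx Hx'.
have FR q : F q -> R q by move/F_RU => [].
have Hr1 : U_free U r.1 by move=> i iU; have := Hen i; rewrite Hx //; lia.
case: (U_free_dec r.2) => [Hr2|[i iU ri]].
  apply: leads_trans (extended_reduced FR Er Hr1 Hr2 Hen) _.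
  by apply: IH Hs _ Hx' => // i iU; rewrite ffunE Hx // Hr1 // Hr2.
have zi : 0 < fire x r i by rewrite ffunE Hr1 //; lia.
have [w [s' [Ew Hs' Hsz']]] :=
  extract_consumer (extended_consumer iU) Hs zi (Hx' i iU).
have Rw := extended_e iU Ew.
have Ea := extended_absorb iU Er Hr1 ri Rw.
have Hen2 : enabled x (oplus r (e i, w)).
  apply/enabled_oplus; split=> // j; rewrite ffunE.
  by case: eqVneq => [->|_] //=; rewrite zi.
apply: (IH (oplus r (e i, w) :: s')) Hx Hx'; first by move: Hsz Hsz' => /=; lia.
by split=> //; rewrite fire_oplus.
Qed.

End Reduction.

Theorem theorem5p6 (n : nat) (R : rset n) (U : {set 'I_n}) (F : rset n) :
  is_RN R ->
  (forall r, F r -> subU U R r) ->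
  eliminable U R F ->
  (forall x x' : complex n, leads (reduced U R F) x x' -> leads R x x') /\
  (intermediate U R -> (forall r, F r <-> subU U R r) ->
   forall x x' : complex n, (supp x :|: supp x') :&: U = set0 ->
   leads R x x' -> leads (reduced U R F) x x').
Proof.
move=> _ F_RU _; split; first by apply: reduced_leads => r /F_RU [].
move=> inter F_RU' x x' Hsupp /leads_trace [s Hs].
move/eqP: Hsupp; rewrite setIUl setU_eq0 => /andP [/eqP Hx /eqP Hx'].
apply: (extended_trace_reduced inter F_RU' (s := s)).
- by apply: trace_mono Hs => r Rr; left.
- exact/U_free_supp.
- exact/U_free_supp.
Qed.
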